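(* Assume that $\mathbb{E}[\bar{w}_k] = 0$ and $\mathbb{E}[\| \bar{w}_k \|^4] \leq \bar{\sigma}_4$ for all $k\in \mathbb{N}$. Suppose that the feedback gain $K$ and observer gain $L$ are chosen such that $\|\bar{A}_{KL}\| = \bar{\rho}_K <1$. Then the variance of the random variable \begin{align*} G^{KL}(\bar{x}) &= \bar{x}^{\rm{T}} \bar{P} \bar{x} + 2 \sum_{k = 0 }^{\infty} \gamma^{k+1} \bar{w}_k^{\rm{T}} \bar{P} \bar{A}_{KL}^{k+1}\bar{x} + \sum_{k = 0 }^{\infty} \gamma^{k+1} \bar{w}_k^{\rm{T}} \bar{P} \bar{w}_k \\ &\quad + 2 \sum_{k = 1 }^{\infty} \gamma^{k+1} \bar{w}_k^{\rm{T}} \bar{P} \sum_{\tau=0}^{k-1} \bar{A}_{KL}^{k-\tau}\bar{w}_{\tau} \end{align*} is bounded.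
   Context: Partially observable system $x_{t+1}=A x_t + B u_t + v_t$, $y_t = C x_t + s_t$ with estimator $\hat{x}_{t+1} = A \hat{x}_t + B u_t + L(y_t - C \hat{x}_t)$ and controller $u_t = K\hat{x}_t$. With $\tilde{x}_t = x_t-\hat{x}_t$ and $\bar{x}_t = [x_t^{\rm{T}}, \tilde{x}_t^{\rm{T}}]^{\rm{T}}$, the augmented dynamics are $\bar{x}_{t+1} = \bar{A}_{KL}\bar{x}_t + \bar{v}_t$, $\bar{A}_{KL} = \begin{bmatrix} A+BK & -BK \\ 0 & A-LC\end{bmatrix}$, $\bar{v}_t = \begin{bmatrix} I & 0 \\ I & -L\end{bmatrix}\begin{bmatrix} v_t \\ s_t\end{bmatrix}$, i.i.d. with distribution $\bar{\mathcal{D}}$. $Q,R>0$, $\gamma\in(0,1)$, $\bar{Q}_K=\begin{bmatrix} Q + K^{\rm{T}} R K & -K^{\rm{T}} R K \\ -K^{\rm{T}} R K & K^{\rm{T}} R K \end{bmatrix}$, and $\bar{P}$ solves $\bar{P} = \bar{Q}_K + \gamma \bar{A}_{KL}^{\rm{T}} \bar{P} \bar{A}_{KL}$. The $\bar{w}_k\sim\bar{\mathcal{D}}$ are mutually independent; $\bar{x}$ is the augmented initial state. This random variable is the fixed point of the distributional Bellman equation for the return $\sum_t \gamma^t \bar{x}_t^{\rm{T}}\bar{Q}_K\bar{x}_t$. $\|\cdot\|$ is the spectral norm. *)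

From HB Require Import structures.
From mathcomp Require Import all_boot all_order all_algebra.
From mathcomp Require Import all_classical all_reals all_analysis.
Set Implicit Arguments. Unset Strict Implicit. Unset Printing Implicit Defensive.
Import Order.TTheory GRing.Theory Num.Theory.
Local Open Scope classical_set_scope.
Local Open Scope ring_scope.

Definition enorm (R : realType) (N : nat) (v : 'cV[R]_N) : R :=
  Num.sqrt (\sum_(i < N) v i 0 ^+ 2).

Definition spec_norm (R : realType) (M N : nat) (X : 'M[R]_(M, N)) : R :=
  sup [set enorm (X *m v) | v in [set v : 'cV[R]_N | enorm v <= 1]].

Definition posdef (R : realType) (N : nat) (X : 'M[R]_N) : Prop :=
  X^T = X /\ forall v : 'cV[R]_N, v != 0 -> 0 < (v^T *m X *m v) 0 0.

Definition Abar (R : realType) (n m p : nat) (A : 'M[R]_n) (B : 'M[R]_(n, m))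
  (C : 'M[R]_(p, n)) (K : 'M[R]_(m, n)) (L : 'M[R]_(n, p)) : 'M[R]_(n + n) :=
  block_mx (A + B *m K) (- (B *m K)) 0 (A - L *m C).

Definition Mbar (R : realType) (n p : nat) (L : 'M[R]_(n, p)) : 'M[R]_(n + n, n + p) :=
  block_mx 1%:M 0 1%:M (- L).

Definition Qbar (R : realType) (n m : nat) (Q : 'M[R]_n) (Rc : 'M[R]_m)
  (K : 'M[R]_(m, n)) : 'M[R]_(n + n) :=
  block_mx (Q + K^T *m Rc *m K) (- (K^T *m Rc *m K))
           (- (K^T *m Rc *m K)) (K^T *m Rc *m K).

Definition qf (R : realType) (N : nat) (P : 'M[R]_N) (u v : 'cV[R]_N) : R :=
  (u^T *m P *m v) 0 0.

Definition rseries (R : realType) (m : nat) (u : nat -> R) : R :=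
  limn (fun N => \sum_(m <= k < N) u k).

(* Mutual independence of a sequence of random vectors: product rule for
   every finite family of distinct indices and every family of measurable
   rectangles (these generate the Borel sigma-algebra of R^N). *)
Definition rect_event (d : measure_display) (T : measurableType d) (R : realType)
  (N : nat) (X : T -> 'cV[R]_N) (A : 'I_N -> set R) : set T :=
  [set w | forall i, A i (X w i 0)].

Definition mutually_independent (d : measure_display) (T : measurableType d)
  (R : realType) (P : probability T R) (N : nat) (w : nat -> T -> 'cV[R]_N) : Prop :=
  forall (J : seq nat) (A : nat -> 'I_N -> set R),
    uniq J -> (forall k i, measurable (A k i)) ->
    P (\bigcap_(k in [set` J]) rect_event (w k) (A k))
    = (\prod_(k <- J) P (rect_event (w k) (A k)))%E.

Definition identically_distributed (d : measure_display) (T : measurableType d)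
  (R : realType) (P : probability T R) (N : nat) (w : nat -> T -> 'cV[R]_N) : Prop :=
  forall (k : nat) (A : 'I_N -> set R), (forall i, measurable (A i)) ->
    P (rect_event (w k) A) = P (rect_event (w 0%N) A).

Definition GKL (d : measure_display) (T : measurableType d) (R : realType)
  (N : nat) (Ab Pb : 'M[R]_N) (gamma : R) (w : nat -> T -> 'cV[R]_N)
  (x : 'cV[R]_N) (om : T) : R :=
  qf Pb x x
  + 2 * rseries 0 (fun k => gamma ^+ k.+1 * qf Pb (w k om) (Ab ^+ k.+1 *m x))
  + rseries 0 (fun k => gamma ^+ k.+1 * qf Pb (w k om) (w k om))
  + 2 * rseries 1 (fun k => gamma ^+ k.+1 *
          qf Pb (w k om) (\sum_(0 <= tau < k) Ab ^+ (k - tau) *m w tau om)).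

From HB Require Import structures.
From mathcomp Require Import all_boot all_order all_algebra.
From mathcomp Require Import all_classical all_reals all_analysis.
From mathcomp Require Import ring lra measurable_realfun.
Set Implicit Arguments. Unset Strict Implicit. Unset Printing Implicit Defensive.
Import Order.TTheory GRing.Theory Num.Theory.
Local Open Scope classical_set_scope.
Local Open Scope ring_scope.

(* The bound holds path by path. Write a_k = |w_k| and S = sum_k gamma^k a_k^4.
   A weighted Cauchy-Schwarz inequality gives
   sum_k gamma^k a_k^2 <= sqrt (S / (1 - gamma)), and each of the three series
   in G^{KL} is dominated by this quantity: the state term because
   |Abar^k| <= 1, the noise-noise cross term by a Schur test for the summable
   kernel |Abar|^(k - t). Hence |G - c| <= alpha + beta sqrt S for every
   constant c, so (G - c)^2 <= K0 + K1 S, and monotone convergence gives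
   E[S] <= sigma4 / (1 - gamma). *)

Section matrix_norms.
Variable R : realType.
Implicit Types (N M K : nat).

Lemma enorm_ge0 N (v : 'cV[R]_N) : 0 <= enorm v.
Proof. exact: sqrtr_ge0. Qed.

Lemma enorm_sqr N (v : 'cV[R]_N) : enorm v ^+ 2 = \sum_(i < N) v i 0 ^+ 2.
Proof. by rewrite sqr_sqrtr // sumr_ge0 // => i _; rewrite sqr_ge0. Qed.

Lemma enorm0 N : enorm (0 : 'cV[R]_N) = 0.
Proof. by rewrite /enorm big1 ?sqrtr0 // => i _; rewrite mxE expr0n. Qed.

Lemma enormZ N a (v : 'cV[R]_N) : enorm (a *: v) = `|a| * enorm v.
Proof.
rewrite /enorm -sqrtr_sqr -sqrtrM ?sqr_ge0 //; congr Num.sqrt.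
by rewrite mulr_sumr; apply: eq_bigr => i _; rewrite mxE exprMn.
Qed.

Lemma abs_coord_le_enorm N (v : 'cV[R]_N) i : `|v i 0| <= enorm v.
Proof.
rewrite -sqrtr_sqr ler_sqrt ?sumr_ge0 // => [|j _]; last exact: sqr_ge0.
by rewrite (bigD1 i) //= lerDl sumr_ge0 // => j _; rewrite sqr_ge0.
Qed.

Lemma enorm_le_sum_abs N (v : 'cV[R]_N) : enorm v <= \sum_(i < N) `|v i 0|.
Proof.
have sum_ge0 : 0 <= \sum_(i < N) `|v i 0| by apply: sumr_ge0.
rewrite -(ger0_norm sum_ge0) -sqrtr_sqr ler_sqrt ?sqr_ge0 // expr2 mulr_suml.
apply: ler_sum => i _; rewrite -[v i 0 ^+ 2]ger0_norm ?sqr_ge0 // normrX expr2.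
by rewrite ler_wpM2l // (bigD1 i) //= lerDl sumr_ge0.
Qed.

Lemma enorm_eq0 N (v : 'cV[R]_N) : (enorm v == 0) = (v == 0).
Proof.
apply/eqP/eqP => [v0|->]; last exact: enorm0.
apply/matrixP => i j; rewrite (ord1 j) mxE; apply/normr0_eq0/eqP.
by rewrite eq_le normr_ge0 andbT -v0 abs_coord_le_enorm.
Qed.

(* A crude but explicit bound: it makes [spec_norm] a genuine supremum and
   controls the bilinear form [qf]. *)
Definition mxnorm1 M K (X : 'M[R]_(M, K)) := \sum_(i < M) \sum_(j < K) `|X i j|.

Lemma mxnorm1_ge0 M K (X : 'M[R]_(M, K)) : 0 <= mxnorm1 X.
Proof. by apply: sumr_ge0 => i _; apply: sumr_ge0. Qed.

Lemma enorm_mulmx_le_mxnorm1 M K (X : 'M[R]_(M, K)) v :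
  enorm (X *m v) <= mxnorm1 X * enorm v.
Proof.
apply: le_trans (enorm_le_sum_abs _) _; rewrite mulr_suml; apply: ler_sum => i _.
rewrite mxE mulr_suml; apply: le_trans (ler_norm_sum _ _ _) _.
by apply: ler_sum => j _; rewrite normrM ler_wpM2l ?abs_coord_le_enorm.
Qed.

Lemma abs_qf_le N (P : 'M[R]_N) u z :
  `|qf P u z| <= mxnorm1 P * enorm u * enorm z.
Proof.
rewrite /qf mxE; apply: le_trans (ler_norm_sum _ _ _) _.
rewrite /mxnorm1 exchange_big /= !mulr_suml; apply: ler_sum => j _.
rewrite mulr_suml normrM ler_pM ?abs_coord_le_enorm // mxE.
apply: le_trans (ler_norm_sum _ _ _) _; apply: ler_sum => i _.
by rewrite mxE normrM mulrC ler_wpM2l ?abs_coord_le_enorm.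
Qed.

Lemma qf_sumr N (P : 'M[R]_N) I (r : seq I) (F : I -> 'cV[R]_N) u :
  qf P u (\sum_(i <- r) F i) = \sum_(i <- r) qf P u (F i).
Proof. by rewrite /qf mulmx_sumr summxE. Qed.

Lemma spec_norm_has_ubound M K (X : 'M[R]_(M, K)) :
  has_ubound [set enorm (X *m v) | v in [set v : 'cV[R]_K | enorm v <= 1]].
Proof.
exists (mxnorm1 X) => _ [v v_le1 <-]; apply: le_trans (enorm_mulmx_le_mxnorm1 _ _) _.
by rewrite -[leRHS]mulr1 ler_wpM2l // mxnorm1_ge0.
Qed.

Lemma spec_norm_ge0 M K (X : 'M[R]_(M, K)) : 0 <= spec_norm X.
Proof.
rewrite -(enorm0 M) -(mulmx0 _ X); apply: ub_le_sup; first exact: spec_norm_has_ubound.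
by exists 0; rewrite //= enorm0.
Qed.

Lemma enorm_mulmx_le M K (X : 'M[R]_(M, K)) v :
  enorm (X *m v) <= spec_norm X * enorm v.
Proof.
have [->|v_neq0] := eqVneq v 0; first by rewrite mulmx0 !enorm0 mulr0.
have v_gt0 : 0 < enorm v by rewrite lt_neqAle eq_sym enorm_eq0 v_neq0 enorm_ge0.
have unit_le : enorm (X *m ((enorm v)^-1 *: v)) <= spec_norm X.
  apply: ub_le_sup; first exact: spec_norm_has_ubound.
  exists ((enorm v)^-1 *: v) => //=.
  by rewrite enormZ ger0_norm ?invr_ge0 ?enorm_ge0 // mulVf ?gt_eqF.
move: unit_le; rewrite -scalemxAr enormZ ger0_norm ?invr_ge0 ?enorm_ge0 //.
by rewrite mulrC ler_pdivrMr.
Qed.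

Lemma enorm_exp_mulmx_le N (X : 'M[R]_N) j v :
  enorm (X ^+ j *m v) <= spec_norm X ^+ j * enorm v.
Proof.
elim: j => [|j IH]; first by rewrite expr0 mul1mx expr0 mul1r.
rewrite exprS -mulmxE -mulmxA exprS -mulrA; apply: le_trans (enorm_mulmx_le _ _) _.
by rewrite ler_wpM2l ?spec_norm_ge0.
Qed.

End matrix_norms.

Section discounted_sums.
Variable R : realType.

Lemma cauchy_schwarz_weighted n (c b : nat -> R) : (forall k, 0 <= c k) ->
  (\sum_(k < n) c k * b k) ^+ 2 <= (\sum_(k < n) c k) * \sum_(k < n) c k * b k ^+ 2.
Proof.
move=> c_ge0; set C := \sum_(k < n) c k; set B := \sum_(k < n) c k * b k.
set S := \sum_(k < n) c k * b k ^+ 2.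
have [C0|C_neq0] := eqVneq C 0.
  have c0 k : (k < n)%N -> c k = 0.
    move=> kn; apply/eqP; rewrite eq_le c_ge0 andbT -C0 /C.
    by rewrite (bigD1 (Ordinal kn)) //= lerDl sumr_ge0.
  have -> : B = 0 by rewrite /B big1 // => k _; rewrite c0 // mul0r.
  by rewrite C0 expr0n /= mul0r.
have C_gt0 : 0 < C by rewrite lt_neqAle eq_sym C_neq0 sumr_ge0.
(* the variance of b around its c-weighted mean B / C is nonnegative *)
have : 0 <= \sum_(k < n) c k * (b k - B / C) ^+ 2.
  by apply: sumr_ge0 => k _; rewrite mulr_ge0 ?sqr_ge0.
have -> : \sum_(k < n) c k * (b k - B / C) ^+ 2 = S - B ^+ 2 / C.
  transitivity (S - 2 * (B / C) * B + (B / C) ^+ 2 * C); last by field.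
  rewrite /S /B /C !mulr_sumr -sumrB -big_split /=.
  by apply: eq_bigr => k _; ring.
by rewrite subr_ge0 ler_pdivrMr // mulrC.
Qed.

Lemma sum_geom_le (r : R) n : 0 <= r < 1 -> \sum_(k < n) r ^+ k <= (1 - r)^-1.
Proof.
case/andP=> r0 r1; have r1_gt0 : 0 < 1 - r by rewrite subr_gt0.
have : (1 - r) * \sum_(k < n) r ^+ k <= 1 - r ^+ n.
  elim: n => [|n IH]; first by rewrite big_ord0 mulr0 expr0 subrr.
  by rewrite big_ord_recr /= mulrDr exprS; lra.
move=> h; rewrite -[X in _ <= X]mulr1 ler_pdivlMl //; apply: le_trans h _.
by rewrite gerBl exprn_ge0.
Qed.

Definition geom_kernel (r : R) (k t : nat) : R :=
  if (t < k)%N then r ^+ (k - t) else 0.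

Lemma sum_geom_kernel_row_le (r : R) k n : 0 <= r < 1 ->
  \sum_(t < n) geom_kernel r k t <= (1 - r)^-1.
Proof.
case/andP=> r0 r1; have r1_gt0 : 0 < 1 - r by rewrite subr_gt0.
have : (1 - r) * \sum_(t < n) geom_kernel r k t <= r ^+ (k - n).+1.
  elim: n => [|n IH]; first by rewrite big_ord0 mulr0 exprn_ge0.
  rewrite big_ord_recr /= mulrDr; set S := \sum_(_ < _) _ in IH *; clearbody S.
  rewrite /geom_kernel; case: ltnP => nk.
    by rewrite -subnSK // in IH *; rewrite !exprS in IH *; lra.
  rewrite mulr0 addr0; apply: le_trans IH _.
  have /eqP-> : (k - n == 0)%N by rewrite subn_eq0.
  by have /eqP-> : (k - n.+1 == 0)%N by rewrite subn_eq0 ltnW.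
move=> h; rewrite -[X in _ <= X]mulr1 ler_pdivlMl //; apply: le_trans h _.
by rewrite exprn_ile1 // ltW.
Qed.

Lemma sum_geom_kernel_col_le (r : R) t n : 0 <= r < 1 ->
  \sum_(k < n) geom_kernel r k t <= (1 - r)^-1.
Proof.
case/andP=> r0 r1; have r1_gt0 : 0 < 1 - r by rewrite subr_gt0.
have : (1 - r) * \sum_(k < n) geom_kernel r k t <= 1 - r ^+ (n - t).
  elim: n => [|n IH]; first by rewrite big_ord0 mulr0 sub0n expr0 subrr.
  rewrite big_ord_recr /= mulrDr; set S := \sum_(_ < _) _ in IH *; clearbody S.
  rewrite /geom_kernel; case: ltnP => tn.
    by rewrite subSn ?(ltnW tn) // exprS; lra.
  rewrite mulr0 addr0; apply: le_trans IH _.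
  have /eqP-> : (n - t == 0)%N by rewrite subn_eq0.
  by rewrite expr0 subrr subr_ge0 exprn_ile1 // ltW.
move=> h; rewrite -[X in _ <= X]mulr1 ler_pdivlMl //; apply: le_trans h _.
by rewrite gerBl exprn_ge0.
Qed.

Lemma schur_geom_kernel_le (g r : R) (a : nat -> R) n :
  0 <= g <= 1 -> 0 <= r < 1 -> (forall k, 0 <= a k) ->
  \sum_(k < n) \sum_(t < n) g ^+ k * geom_kernel r k t * (a k * a t)
    <= (1 - r)^-1 * \sum_(k < n) g ^+ k * a k ^+ 2.
Proof.
move=> /andP[g0 g1] r01 a_ge0; have /andP[r0 _] := r01.
set S := \sum_(k < n) g ^+ k * a k ^+ 2.
have amgm k t : g ^+ k * geom_kernel r k t * (a k * a t) <=
    (geom_kernel r k t * (g ^+ k * a k ^+ 2)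
     + geom_kernel r k t * (g ^+ t * a t ^+ 2)) / 2.
  rewrite /geom_kernel; case: ltnP => tk; last by rewrite !(mulr0, mul0r, addr0).
  (* g^k <= g^t splits the mixed term into its two diagonal ones *)
  have gkt : g ^+ k <= g ^+ t by rewrite ler_wiXn2l // ltnW.
  have := mulr_ge0 (mulr_ge0 (exprn_ge0 (k - t) r0) (exprn_ge0 k g0)) (sqr_ge0 (a k - a t)).
  have : 0 <= r ^+ (k - t) * (g ^+ t - g ^+ k) * a t ^+ 2.
    by rewrite !mulr_ge0 ?exprn_ge0 ?sqr_ge0 ?subr_ge0.
  by rewrite ler_pdivlMr //; lra.
apply: (le_trans (ler_sum _ (fun k _ =>
  ler_sum _ (fun t _ => amgm (k : 'I_n) (t : 'I_n))))).
under eq_bigr do rewrite -mulr_suml big_split /=.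
rewrite -mulr_suml big_split /= ler_pdivrMr // mulr_natr mulr2n.
apply: lerD.
  rewrite mulr_sumr; apply: ler_sum => k _; rewrite -mulr_suml.
  by rewrite ler_wpM2r ?sum_geom_kernel_row_le // mulr_ge0 ?exprn_ge0 ?sqr_ge0.
rewrite exchange_big /= mulr_sumr; apply: ler_sum => t _; rewrite -mulr_suml.
by rewrite ler_wpM2r ?sum_geom_kernel_col_le // mulr_ge0 ?exprn_ge0 ?sqr_ge0.
Qed.

Lemma rseries_abs_le m (u : nat -> R) (B : R) :
  (forall n, `|\sum_(m <= k < n) u k| <= B) -> `|rseries m u| <= B.
Proof.
move=> partial_le; rewrite /rseries; set f := (fun n => _).
have bounds n : - B <= f n <= B by rewrite -ler_norml; exact: partial_le.
have [cv|ncv] := pselect (cvgn f); last first.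
  (* the limit of a divergent sequence is 0 by convention *)
  by rewrite /lim dvg_inP // normr0 (le_trans _ (partial_le 0%N)) // big_geq.
rewrite ler_norml; apply/andP; split.
  by apply: limr_ge => //; near=> n; have /andP[] := bounds n.
by apply: limr_le => //; near=> n; have /andP[] := bounds n.
Unshelve. all: by end_near. Qed.

End discounted_sums.

Section pathwise_bound.
Variables (R : realType) (d : measure_display) (T : measurableType d) (N : nat).
Variables (P M : 'M[R]_N) (x : 'cV[R]_N) (g : R) (w : nat -> T -> 'cV[R]_N) (om : T).
Hypotheses (g01 : 0 < g < 1) (M_lt1 : spec_norm M < 1).

Let a k := enorm (w k om).
Let rho := spec_norm M.

Let g_ge0 : 0 <= g. Proof. by case/andP: g01 => /ltW. Qed.

Lemma abs_discount_le k (q : R) : `|g ^+ k.+1 * q| <= g ^+ k * `|q|.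
Proof.
case/andP: g01 => _ g_lt1; rewrite normrM ger0_norm ?exprn_ge0 // ler_wpM2r //.
by rewrite exprS ler_piMl ?exprn_ge0 // ltW.
Qed.

Lemma linear_partial_le n :
  `|\sum_(0 <= k < n) g ^+ k.+1 * qf P (w k om) (M ^+ k.+1 *m x)|
    <= mxnorm1 P * enorm x * \sum_(k < n) g ^+ k * (1 + a k ^+ 2).
Proof.
rewrite big_mkord mulr_sumr; apply: le_trans (ler_norm_sum _ _ _) _.
apply: ler_sum => k _; apply: le_trans (abs_discount_le _ _) _.
rewrite mulrCA ler_wpM2l ?exprn_ge0 //; apply: le_trans (abs_qf_le _ _ _) _.
have Mx_le : enorm (M ^+ k.+1 *m x) <= enorm x.
  apply: le_trans (enorm_exp_mulmx_le _ _ _) _.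
  by rewrite ler_piMl ?enorm_ge0 // exprn_ile1 ?spec_norm_ge0 // ltW.
have a_le : a k <= 1 + a k ^+ 2.
  by have := sqr_ge0 (a k - 1); have := sqr_ge0 (a k); lra.
by rewrite -!mulrA ler_wpM2l ?mxnorm1_ge0 // mulrC ler_pM ?enorm_ge0.
Qed.

Lemma diagonal_partial_le n :
  `|\sum_(0 <= k < n) g ^+ k.+1 * qf P (w k om) (w k om)|
    <= mxnorm1 P * \sum_(k < n) g ^+ k * a k ^+ 2.
Proof.
rewrite big_mkord mulr_sumr; apply: le_trans (ler_norm_sum _ _ _) _.
apply: ler_sum => k _; apply: le_trans (abs_discount_le _ _) _.
by rewrite mulrCA ler_wpM2l ?exprn_ge0 // expr2 mulrA abs_qf_le.
Qed.

Lemma cross_partial_le n :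
  `|\sum_(1 <= k < n) g ^+ k.+1 *
      qf P (w k om) (\sum_(0 <= t < k) M ^+ (k - t) *m w t om)|
    <= mxnorm1 P * ((1 - rho)^-1 * \sum_(k < n) g ^+ k * a k ^+ 2).
Proof.
pose F k := g ^+ k.+1 * qf P (w k om) (\sum_(0 <= t < k) M ^+ (k - t) *m w t om).
have drop0 : \sum_(1 <= k < n) `|F k| <= \sum_(0 <= k < n) `|F k|.
  case: n => [|n]; first by rewrite !big_geq.
  by rewrite [X in _ <= X]big_ltn // lerDr.
have term_le k : (k < n)%N ->
    `|F k| <= mxnorm1 P * \sum_(t < n) g ^+ k * geom_kernel rho k t * (a k * a t).
  move=> kn; apply: le_trans (abs_discount_le _ _) _.
  rewrite qf_sumr (big_nat_widen _ _ n) ?(ltnW kn) // big_mkord big_mkcond.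
  apply: le_trans (ler_wpM2l (exprn_ge0 _ g_ge0) (ler_norm_sum _ _ _)) _.
  rewrite !mulr_sumr; apply: ler_sum => t _; rewrite andTb /geom_kernel.
  case: ltnP => _; last by rewrite normr0 !(mulr0, mul0r).
  rewrite -!mulrA mulrCA ler_wpM2l ?exprn_ge0 //; apply: le_trans (abs_qf_le _ _ _) _.
  rewrite -!mulrA ler_wpM2l ?mxnorm1_ge0 // [X in _ <= X]mulrCA ler_wpM2l ?enorm_ge0 //.
  exact: enorm_exp_mulmx_le.
apply: le_trans (ler_norm_sum _ _ _) _; apply: le_trans drop0 _.
rewrite big_mkord (le_trans (ler_sum _ (fun (k : 'I_n) _ => term_le k (ltn_ord k)))) //.
rewrite -mulr_sumr ler_wpM2l ?mxnorm1_ge0 // schur_geom_kernel_le ?spec_norm_ge0 //.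
- by rewrite g_ge0 ltW //; case/andP: g01.
- by move=> k; apply: enorm_ge0.
Qed.

Lemma discounted_sqr_sum_le (t : R) :
  (forall n, \sum_(k < n) g ^+ k * a k ^+ 4 <= t) ->
  forall n, \sum_(k < n) g ^+ k * a k ^+ 2 <= Num.sqrt (t / (1 - g)).
Proof.
move=> quartic_le n; have [_ g_lt1] := andP g01.
have sum_ge0 : 0 <= \sum_(k < n) g ^+ k * a k ^+ 2.
  by apply: sumr_ge0 => k _; rewrite mulr_ge0 ?sqr_ge0 ?exprn_ge0.
have t_ge0 : 0 <= t by have := quartic_le 0%N; rewrite big_ord0.
rewrite -(ger0_norm sum_ge0) -sqrtr_sqr ler_sqrt ?divr_ge0 ?subr_ge0 ?(ltW g_lt1) //.
have := cauchy_schwarz_weighted n (fun k => a k ^+ 2) (fun k => exprn_ge0 k g_ge0).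
move/le_trans; apply.
rewrite [X in _ <= X]mulrC ler_pM ?sumr_ge0 //.
- by move=> k _; apply: exprn_ge0.
- by move=> k _; rewrite mulr_ge0 ?sqr_ge0 ?exprn_ge0.
- by rewrite sum_geom_le // g_ge0.
- by under eq_bigr do rewrite -exprM; apply: quartic_le.
Qed.

Lemma abs_GKL_le (t : R) :
  (forall n, \sum_(k < n) g ^+ k * a k ^+ 4 <= t) ->
  `|GKL M P g w x om| <=
    `|qf P x x| + 2 * (mxnorm1 P * enorm x / (1 - g))
    + (2 * (mxnorm1 P * enorm x) + mxnorm1 P + 2 * (mxnorm1 P / (1 - rho)))
      * Num.sqrt (t / (1 - g)).
Proof.
move=> quartic_le; have [_ g_lt1] := andP g01.
have sqr_sum_le := discounted_sqr_sum_le quartic_le.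
set s := Num.sqrt _ in sqr_sum_le *.
have p_ge0 := mxnorm1_ge0 P; have x_ge0 := enorm_ge0 x.
have linear_le : `|rseries 0 (fun k => g ^+ k.+1 * qf P (w k om) (M ^+ k.+1 *m x))|
    <= mxnorm1 P * enorm x * ((1 - g)^-1 + s).
  apply: rseries_abs_le => n; apply: le_trans (linear_partial_le n) _.
  rewrite ler_wpM2l ?mulr_ge0 //; under eq_bigr do rewrite mulrDr mulr1.
  by rewrite big_split lerD ?sqr_sum_le ?sum_geom_le // g_ge0.
have diagonal_le : `|rseries 0 (fun k => g ^+ k.+1 * qf P (w k om) (w k om))|
    <= mxnorm1 P * s.
  apply: rseries_abs_le => n; apply: le_trans (diagonal_partial_le n) _.
  by rewrite ler_wpM2l.
have cross_le : `|rseries 1 (fun k => g ^+ k.+1 *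
        qf P (w k om) (\sum_(0 <= t < k) M ^+ (k - t) *m w t om))|
    <= mxnorm1 P * ((1 - rho)^-1 * s).
  apply: rseries_abs_le => n; apply: le_trans (cross_partial_le n) _.
  by rewrite ler_wpM2l // ler_wpM2l // invr_ge0 subr_ge0 ltW.
have abs_sum_le (q b c e : R) :
    `|q + 2 * b + c + 2 * e| <= `|q| + 2 * `|b| + `|c| + 2 * `|e|.
  have := ler_normD (q + 2 * b + c) (2 * e); have := ler_normD (q + 2 * b) c.
  by have := ler_normD q (2 * b); rewrite !normrM normr_nat; lra.
by apply: le_trans (abs_sum_le _ _ _ _) _; lra.
Qed.

End pathwise_bound.

Lemma sqr_sub_le (R : realDomainType) (y c u v : R) :
  `|y| <= u + v -> (y - c) ^+ 2 <= 2 * (`|c| + u) ^+ 2 + 2 * v ^+ 2.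
Proof.
move=> y_le; have yc_le : `|y - c| <= (`|c| + u) + v.
  by apply: le_trans (ler_normB _ _) _; lra.
rewrite -real_normK ?num_real //.
have := normr_ge0 (y - c); have := sqr_ge0 (`|c| + u - v); nra.
Qed.

Lemma sqr_GKL_sub_le (R : realType) N (P M : 'M[R]_N) (x : 'cV[R]_N) (g c : R) :
  0 < g < 1 -> spec_norm M < 1 ->
  exists K0 K1 : R, [/\ 0 <= K0, 0 < K1 &
    forall d (T : measurableType d) (w : nat -> T -> 'cV[R]_N) om,
      (((GKL M P g w x om - c) ^+ 2)%:E
        <= K0%:E + K1%:E * \sum_(k <oo) (g ^+ k * enorm (w k om) ^+ 4)%:E)%E].
Proof.
move=> g01 M_lt1; have [g_gt0 g_lt1] := andP g01.
pose al := `|qf P x x| + 2 * (mxnorm1 P * enorm x / (1 - g)).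
pose be := 2 * (mxnorm1 P * enorm x) + mxnorm1 P + 2 * (mxnorm1 P / (1 - spec_norm M)).
(* the [+ 1] keeps [K1] positive, so that [K1 * +oo = +oo] when S diverges *)
have K1_ge1 : 1 <= 2 * be ^+ 2 / (1 - g) + 1.
  by rewrite lerDr divr_ge0 ?subr_ge0 ?(ltW g_lt1) // mulr_ge0 ?sqr_ge0.
exists (2 * (`|c| + al) ^+ 2), (2 * be ^+ 2 / (1 - g) + 1); split.
- by rewrite mulr_ge0 ?sqr_ge0.
- exact: lt_le_trans K1_ge1.
move=> d T w om.
have term_ge0 k : 0 <= g ^+ k * enorm (w k om) ^+ 4.
  by apply: mulr_ge0; apply: exprn_ge0; [apply: ltW | apply: enorm_ge0].
have partial_le n : (\sum_(k < n) (g ^+ k * enorm (w k om) ^+ 4)%:E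
    <= \sum_(k <oo) (g ^+ k * enorm (w k om) ^+ 4)%:E)%E.
  have := @nneseries_lim_ge R (fun k => (g ^+ k * enorm (w k om) ^+ 4)%:E) xpredT 0%N n.
  by rewrite big_mkord; apply=> k _ _; rewrite lee_fin.
have := partial_le 0%N; rewrite big_ord0.
case: (\sum_(k <oo) _)%E partial_le => [t partial_le | _ _ |//]; last first.
  by rewrite gt0_muley ?lte_fin ?(lt_le_trans _ K1_ge1) // addey // leey.
rewrite !lee_fin => t_ge0.
have quartic_le n : \sum_(k < n) g ^+ k * enorm (w k om) ^+ 4 <= t.
  by rewrite -lee_fin -sumEFin.
apply: le_trans (sqr_sub_le c (abs_GKL_le P x g01 M_lt1 quartic_le)) _.
rewrite exprMn sqr_sqrtr ?divr_ge0 ?subr_ge0 ?(ltW g_lt1) // lerD2l.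
by rewrite -/be; lra.
Qed.

Section expectation_bounds.
Context d (T : measurableType d) (R : realType).

(* No measurability is needed: a nonnegative integral is a supremum over the
   simple functions below the integrand. *)
Lemma ge0_le_integralT (mu : {measure set T -> \bar R}) (f h : T -> \bar R) :
  (forall x, (0 <= f x)%E) -> (forall x, (f x <= h x)%E) ->
  (\int[mu]_x f x <= \int[mu]_x h x)%E.
Proof.
move=> f_ge0 f_le_h; have h_ge0 x : (0 <= h x)%E := le_trans (f_ge0 x) (f_le_h x).
rewrite !ge0_integralTE //; apply: ereal_sup_le => _ [s s_le <-].
by exists s => //= x; apply: le_trans (s_le x) (f_le_h x).
Qed.

Lemma measurable_enorm_exp4 N (w : T -> 'cV[R]_N) :
  (forall i, measurable_fun setT (fun om => w om i 0)) ->
  measurable_fun setT (fun om => enorm (w om) ^+ 4).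
Proof.
move=> w_meas; under eq_fun do rewrite (_ : 4 = 2 * 2)%N // exprM enorm_sqr.
by apply: measurable_funX; apply: measurable_sum => i; apply: measurable_funX.
Qed.

Variable P : probability T R.
Variables (f : nat -> T -> R) (g sigma : R).
Hypotheses (g01 : 0 <= g < 1) (f_ge0 : forall k om, 0 <= f k om).
Hypotheses (f_meas : forall k, measurable_fun setT (f k)).
Hypothesis f_le : forall k, ('E_P[f k] <= sigma%:E)%E.

Let gf_ge0 k om : (0 <= (g ^+ k * f k om)%:E)%E.
Proof. by rewrite lee_fin mulr_ge0 ?exprn_ge0 //; case/andP: g01. Qed.

Let gf_meas k : measurable_fun setT (fun om => (g ^+ k * f k om)%:E).
Proof. by apply/measurable_EFinP; apply: measurable_funM. Qed.

Lemma integral_discounted_nneseries_le :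
  (\int[P]_om \sum_(k <oo) (g ^+ k * f k om)%:E <= (sigma / (1 - g))%:E)%E.
Proof.
have [g_ge0 g_lt1] := andP g01.
have sigma_ge0 : 0 <= sigma.
  rewrite -lee_fin; apply: le_trans (f_le 0%N); rewrite expectation.unlock.
  by apply: integral_ge0 => om _; rewrite lee_fin.
rewrite integral_nneseries //.
apply: (@le_trans _ _ (\sum_(k <oo) (g ^+ k * sigma)%:E)%E).
  apply: lee_nneseries => [k _ _|k _]; first by apply: integral_ge0.
  under eq_integral do rewrite EFinM.
  rewrite ge0_integralZl_EFin ?exprn_ge0 //.
  - rewrite EFinM lee_wpmul2l ?lee_fin ?exprn_ge0 //.
    by have := f_le k; rewrite expectation.unlock.
  - by move=> om _; rewrite lee_fin.
  - exact/measurable_EFinP.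
apply: lime_le; first by apply: is_cvg_nneseries => k _ _; rewrite lee_fin mulr_ge0 ?exprn_ge0.
apply: nearW => n; rewrite sumEFin lee_fin big_mkord -mulr_suml mulrC ler_wpM2l //.
exact: sum_geom_le.
Qed.

Lemma integral_affine_discounted_le (K0 K1 : R) : 0 <= K0 -> 0 <= K1 ->
  (\int[P]_om (K0%:E + K1%:E * \sum_(k <oo) (g ^+ k * f k om)%:E)
    <= (K0 + K1 * (sigma / (1 - g)))%:E)%E.
Proof.
move=> K0_ge0 K1_ge0.
have S_ge0 om : (0 <= \sum_(k <oo) (g ^+ k * f k om)%:E)%E.
  by apply: nneseries_ge0 => k _ _.
have S_meas : measurable_fun setT (fun om => \sum_(k <oo) (g ^+ k * f k om)%:E)%E.
  by apply: ge0_emeasurable_sum => // k om _ _.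
rewrite ge0_integralD //; last 2 first.
- by move=> om _; rewrite mule_ge0 ?lee_fin.
- exact: measurable_funeM.
have -> : (\int[P]_om K0%:E = K0%:E)%E.
  rewrite (integral_cst P measurableT) -[RHS]mule1; congr (_ * _)%E.
  exact: probability_setT.
rewrite ge0_integralZl //.
by rewrite EFinD EFinM leeD2l // lee_wpmul2l ?lee_fin // integral_discounted_nneseries_le.
Qed.

End expectation_bounds.

Theorem corollary2 (R : realType) (d : measure_display) (T : measurableType d)
  (P : probability T R) (n m p : nat)
  (A : 'M[R]_n) (B : 'M[R]_(n, m)) (C : 'M[R]_(p, n))
  (Q : 'M[R]_n) (Rc : 'M[R]_m) (K : 'M[R]_(m, n)) (L : 'M[R]_(n, p))
  (gamma sigma4 : R) (Pb : 'M[R]_(n + n))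
  (v : nat -> T -> 'cV[R]_n) (s : nat -> T -> 'cV[R]_p)
  (xbar : 'cV[R]_(n + n)) :
  posdef Q -> posdef Rc -> 0 < gamma < 1 ->
  Pb = Qbar Q Rc K + gamma *: ((Abar A B C K L)^T *m Pb *m Abar A B C K L) ->
  let w := fun k om => Mbar L *m col_mx (v k om) (s k om) in
  (forall k i, measurable_fun setT (fun om => w k om i 0)) ->
  mutually_independent P w ->
  identically_distributed P w ->
  (forall k i, ('E_P[fun om => (w k om i 0)%R] = 0)%E) ->
  (forall k, ('E_P[fun om => (enorm (w k om) ^+ 4)%R] <= sigma4%:E)%E) ->
  spec_norm (Abar A B C K L) < 1 ->
  exists c : R,
    ('V_P[GKL (Abar A B C K L) Pb gamma w xbar] <= c%:E)%E.
Proof.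
move=> _ _ g01 _ w w_meas _ _ _ w_moment4 A_lt1.
set G := GKL (Abar A B C K L) Pb gamma w xbar.
rewrite /variance covariance.unlock; set c := fine _.
have [K0 [K1 [K0_ge0 K1_gt0 sqr_le]]] := sqr_GKL_sub_le Pb xbar c g01 A_lt1.
exists (K0 + K1 * (sigma4 / (1 - gamma))); rewrite expectation.unlock.
pose sqr_dev om := (((G \- cst c) * (G \- cst c)) om)%:E.
apply: le_trans (ge0_le_integralT P (f := sqr_dev) _ (sqr_le d T w)) _.
  by move=> om; rewrite lee_fin -expr2 sqr_ge0.
apply: integral_affine_discounted_le (ltW K1_gt0) => //.
- by case/andP: g01 => /ltW -> ->.
- by move=> k om; rewrite exprn_ge0 ?enorm_ge0.
- by move=> k; apply: measurable_enorm_exp4 => i; apply: w_meas.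
Qed.
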